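(* Let $g$ be a generating function, $t$ a witness function, and $\mathcal P_g,\mathcal P_t$ sets of p-conditions. Then for every program $\Pi$, the graph $T(\mathcal P_g,\mathcal P_t,g,t)(\Pi)$ is finite and acyclic.
   Context: Literals are atoms $a$ or negations $\neg a$; $\overline{l}$ is the complement of $l$. A set of literals is consistent if it contains no literal together with its complement; $\mathrm{atoms}(L)$ is the set of atoms in $L$; $L$ is complete over $X$ if $\mathrm{atoms}(L)=X$. A program $\Pi$ is a finite set of rules $A\leftarrow B$, with head $A$ a possibly empty disjunction of atoms and body $B$ an expression $a_1,\dots,a_j,\ not\ a_{j+1},\dots,not\ a_k$ (identified with a conjunction of literals); non-disjunctive if every head has at most one atom. $\mathrm{atoms}(\Pi)$ is the set of atoms of $\Pi$. A p-condition maps a program $\Pi$ and a set $L$ of literals over $\mathrm{atoms}(\Pi)$ to a set of literals over $\mathrm{atoms}(\Pi)$; $\mathrm{Out}_{\mathcal P}(\Pi,M)=\bigcup_{p\in\mathcal P}p(\Pi,M)$. A generating function $g$ maps each program $\Pi$ to a program $g(\Pi)$ with $\mathrm{atoms}(\Pi)\subseteq\mathrm{atoms}(g(\Pi))$. A set $M$ covers $\Pi$ if $\mathrm{atoms}(\Pi)\subseteq\mathrm{atoms}(M)$. A witness function $t$ maps a program $\Pi$ and a consistent $M$ covering $\Pi$ to a non-disjunctive program $t(\Pi,M)$. $\mathrm{atoms}(t,\Pi,X)$ is the union of $\mathrm{atoms}(t(\Pi,L))$ over consistent $L$ complete over $X$. A record relative to a set $X$ of atoms is a finite string of literals over $X$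 and possibly $\bot$, without repetitions, in which some literals may be annotated as decision literals $l^\Delta$; it is identified when convenient with the set of its elements and is inconsistent if it contains $\bot$ or a literal and its complement. A state relative to $X,X'$ is $(L,R)_s$ ($L$ a record relative to $X$, $R$ relative to $X'$, $s\in\{\mathcal L,\mathcal R\}$), or $\mathit{Ok}(L)$ ($L$ a record relative to $X$), or $\mathit{Failstate}$. $T(\mathcal P_{\mathcal L},\mathcal P_{\mathcal R},g,t)(\Pi)$ has as nodes the states relative to $\mathrm{atoms}(g(\Pi))$ and $\mathrm{atoms}(t,\Pi,\mathrm{atoms}(g(\Pi)))$, initial state $(\emptyset,\emptyset)_{\mathcal L}$, and edges given by ($L,L',R,R'$ records, $l$ a literal): Left-rules: Conclude$_{\mathcal L}$: $(L,\emptyset)_{\mathcal L}\Rightarrow\mathit{Failstate}$ if $L$ is inconsistent with no decision literal. Backtrack$_{\mathcal L}$: $(L\,l^\Delta L',\emptyset)_{\mathcal L}\Rightarrow(L\,\overline l,\emptyset)_{\mathcal L}$ if $L\,l^\Delta L'$ is inconsistent and $L'$ has no decision literal. Propagate$_{\mathcal L}$: $(L,\emptyset)_{\mathcal L}\Rightarrow(L\,l,\emptyset)_{\mathcal L}$ if $l\in\mathrm{Out}_{\mathcal P_{\mathcal L}}(g(\Pi),L)$. Decide$_{\mathcal L}$: $(L,\emptyset)_{\mathcal L}\Rightarrow(L\,l^\Delta,\emptyset)_{\mathcal L}$ if $L$ consistent, $l$ over $\mathrm{atoms}(g(\Pi))$, neither $l$ nor $\overline l$ in $L$. Cross$_{\mathcal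 L\mathcal R}$: $(L,\emptyset)_{\mathcal L}\Rightarrow(L,\emptyset)_{\mathcal R}$ if no left-rule applies. Right-rules: Conclude$_{\mathcal R}$: $(L,R)_{\mathcal R}\Rightarrow\mathit{Ok}(L)$ if $R$ is inconsistent with no decision literal. Backtrack$_{\mathcal R}$: $(L,R\,l^\Delta R')_{\mathcal R}\Rightarrow(L,R\,\overline l)_{\mathcal R}$ if $R\,l^\Delta R'$ inconsistent and $R'$ has no decision literal. Propagate$_{\mathcal R}$: $(L,R)_{\mathcal R}\Rightarrow(L,R\,l)_{\mathcal R}$ if $l\in\mathrm{Out}_{\mathcal P_{\mathcal R}}(t(\Pi,L),R)$. Decide$_{\mathcal R}$: $(L,R)_{\mathcal R}\Rightarrow(L,R\,l^\Delta)_{\mathcal R}$ if $R$ consistent, $l$ over $\mathrm{atoms}(t(\Pi,L))$, neither $l$ nor $\overline l$ in $R$. Conclude$_{\mathcal R\mathcal L}$: $(L,R)_{\mathcal R}\Rightarrow\mathit{Failstate}$ if no right-rule applies and $L$ has no decision literal. Backtrack$_{\mathcal R\mathcal L}$: $(L\,l^\Delta L',R)_{\mathcal R}\Rightarrow(L\,\overline l,\emptyset)_{\mathcal L}$ if no right-rule applies and $L'$ has no decision literal. *)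

From Stdlib Require Import Relations List.
From mathcomp Require Import all_boot.
Set Implicit Arguments.
Unset Strict Implicit.
Unset Printing Implicit Defensive.

Section ASP.
Variable A : eqType.

(* literal (a, true) = a ; (a, false) = not a *)
Definition lit := (A * bool)%type.
Definition compl (l : lit) : lit := (l.1, ~~ l.2).

(* rule  head <- pos, not neg ;  head is a (possibly empty) disjunction *)
Record rule := Rule { head : seq A; pbody : seq A; nbody : seq A }.
Definition program := seq rule.
Definition rule_atoms (r : rule) : seq A := head r ++ pbody r ++ nbody r.
Definition atoms (P : program) : seq A := flatten (map rule_atoms P).
Definition non_disjunctive (P : program) : bool :=
  all (fun r => size (head r) <= 1) P.

(* sets of literals are represented by lists *)
Definition lconsistent (L : seq lit) : bool := all (fun l => compl l \notin L) L.
Definition latoms (L : seq lit) : seq A := map fst L.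
Definition covers (P : program) (M : seq lit) : Prop :=
  {subset atoms P <= latoms M}.
Definition complete_over (L : seq lit) (X : seq A) : Prop := latoms L =i X.

Definition pcond := program -> seq lit -> seq lit.
Definition is_pcond (p : pcond) : Prop :=
  forall P L, {subset latoms L <= atoms P} -> {subset latoms (p P L) <= atoms P}.
Definition Out (PP : pcond -> Prop) (P : program) (M : seq lit) (l : lit) : Prop :=
  exists p, PP p /\ l \in p P M.

Definition is_gen (g : program -> program) : Prop :=
  forall P, {subset atoms P <= atoms (g P)}.
Definition is_wit (t : program -> seq lit -> program) : Prop :=
  forall P M, lconsistent M -> covers P M -> non_disjunctive (t P M).
Definition atoms_t (t : program -> seq lit -> program) (P : program) (X : seq A)
  (a : A) : Prop :=
  exists L : seq lit, uniq L /\ lconsistent L /\ complete_over L X /\ a \in atoms (t P L).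

(* records: None = bottom, Some (l, true) = decision literal l^Delta,
   Some (l, false) = ordinary literal l *)
Definition elem := option (lit * bool).
Definition record := seq elem.
Definition record_lits (R : record) : seq lit := pmap (omap fst) R.
Definition is_record (X : A -> Prop) (R : record) : Prop :=
  uniq (map (omap fst) R) /\ forall l, l \in record_lits R -> X l.1.
Definition rinconsistent (R : record) : bool :=
  (None \in R) || ~~ lconsistent (record_lits R).
Definition has_decision (R : record) : bool :=
  has (fun e => if e is Some (_, true) then true else false) R.

Inductive side := SL | SR.
Inductive state :=
  | Pair of record & record & side
  | Ok of record
  | Failstate.

Definition is_state (X X' : A -> Prop) (s : state) : Prop :=
  match s with
  | Pair L R _ => is_record X L /\ is_record X' R
  | Ok L => is_record X L
  | Failstate => True
  end.

Variables (PL PR : pcond -> Prop) (g : program -> program)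
  (t : program -> seq lit -> program) (Pi : program).

Definition XL : A -> Prop := fun a => a \in atoms (g Pi).
Definition XR : A -> Prop := atoms_t t Pi (atoms (g Pi)).
Definition node (s : state) : Prop := is_state XL XR s.

Inductive left_rule : state -> state -> Prop :=
  | ConcludeL L : rinconsistent L -> ~~ has_decision L ->
      left_rule (Pair L [::] SL) Failstate
  | BacktrackL L0 l L' : rinconsistent (L0 ++ Some (l, true) :: L') ->
      ~~ has_decision L' ->
      left_rule (Pair (L0 ++ Some (l, true) :: L') [::] SL)
                (Pair (rcons L0 (Some (compl l, false))) [::] SL)
  | PropagateL L l : Out PL (g Pi) (record_lits L) l ->
      left_rule (Pair L [::] SL) (Pair (rcons L (Some (l, false))) [::] SL)
  | DecideL L l : ~~ rinconsistent L -> l.1 \in atoms (g Pi) ->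
      l \notin record_lits L -> compl l \notin record_lits L ->
      left_rule (Pair L [::] SL) (Pair (rcons L (Some (l, true))) [::] SL).

Inductive right_rule : state -> state -> Prop :=
  | ConcludeR L R : rinconsistent R -> ~~ has_decision R ->
      right_rule (Pair L R SR) (Ok L)
  | BacktrackR L R0 l R' : rinconsistent (R0 ++ Some (l, true) :: R') ->
      ~~ has_decision R' ->
      right_rule (Pair L (R0 ++ Some (l, true) :: R') SR)
                 (Pair L (rcons R0 (Some (compl l, false))) SR)
  | PropagateR L R l : Out PR (t Pi (record_lits L)) (record_lits R) l ->
      right_rule (Pair L R SR) (Pair L (rcons R (Some (l, false))) SR)
  | DecideR L R l : ~~ rinconsistent R -> l.1 \in atoms (t Pi (record_lits L)) ->
      l \notin record_lits R -> compl l \notin record_lits R ->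
      right_rule (Pair L R SR) (Pair L (rcons R (Some (l, true))) SR).

(* a rule "applies" at a node if it yields an edge to a node *)
Definition lstep (s s' : state) : Prop := node s /\ node s' /\ left_rule s s'.
Definition rstep (s s' : state) : Prop := node s /\ node s' /\ right_rule s s'.

Inductive other_rule : state -> state -> Prop :=
  | CrossLR L : ~ (exists s', lstep (Pair L [::] SL) s') ->
      other_rule (Pair L [::] SL) (Pair L [::] SR)
  | ConcludeRL L R : ~ (exists s', rstep (Pair L R SR) s') -> ~~ has_decision L ->
      other_rule (Pair L R SR) Failstate
  | BacktrackRL L0 l L' R : ~ (exists s', rstep (Pair (L0 ++ Some (l, true) :: L') R SR) s') ->
      ~~ has_decision L' ->
      other_rule (Pair (L0 ++ Some (l, true) :: L') R SR)
                 (Pair (rcons L0 (Some (compl l, false))) [::] SL).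

Definition edge (s s' : state) : Prop :=
  node s /\ node s' /\ (left_rule s s' \/ right_rule s s' \/ other_rule s s').

Definition graph_finite : Prop := exists ns : list state, forall s, node s -> Stdlib.Lists.List.In s ns.
Definition graph_acyclic : Prop := forall s, ~ clos_trans state edge s s.

End ASP.

(** Every edge of the graph strictly increases the following rank of a state
   in the lexicographic order: the left record, a separator, the side, and the
   right record, each record element weighted 1 for a decision literal and 2
   otherwise, with Ok and Failstate above every pair state.  Propagate and
   Decide extend a record, Cross raises the side flag, and every Backtrack turns
   a decision literal into an ordinary one while discarding what follows it, so
   no path returns to where it started.  Finiteness holds because a record is a
   repetition-free list of elements built from finitely many atoms: those of
   g(Pi) on the left, and on the right those of t(Pi, L) for the finitely many
   complete literal lists L over atoms(g(Pi)). *)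

From Stdlib Require Import Relations List.
From mathcomp Require Import all_boot all_order.
Set Implicit Arguments.
Unset Strict Implicit.
Unset Printing Implicit Defensive.

Lemma In_mem (T : eqType) (x : T) (s : seq T) : x \in s -> List.In x s.
Proof. by elim: s => //= y s IH; rewrite in_cons => /orP[/eqP ->|/IH]; auto. Qed.

Fixpoint seqs_upto (T : Type) (n : nat) (U : seq T) : seq (seq T) :=
  if n is n'.+1 then [::] :: allpairs cons U (seqs_upto n' U) else [:: [::]].

Lemma mem_seqs_upto (T : eqType) (U s : seq T) n :
  size s <= n -> {subset s <= U} -> s \in seqs_upto n U.
Proof.
elim: n s => [|n IH] [|x s] //= le_s_n sub_s_U; rewrite ?mem_head //.
rewrite in_cons allpairs_f ?orbT ?sub_s_U ?mem_head // IH // => y s_y.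
by rewrite sub_s_U // in_cons s_y orbT.
Qed.

Lemma uniq_mem_seqs_upto (T : eqType) (U s : seq T) :
  uniq s -> {subset s <= U} -> s \in seqs_upto (size U) U.
Proof. by move=> uniq_s sub_s_U; rewrite mem_seqs_upto ?uniq_leq_size. Qed.

Section FiniteStates.
Variable A : eqType.
Implicit Types (xs : seq A) (X : A -> Prop).

Definition lits_over xs : seq (lit A) := [seq (a, b) | a <- xs, b <- [:: true; false]].

Lemma mem_lits_over xs (l : lit A) : (l \in lits_over xs) = (l.1 \in xs).
Proof.
case: l => a b; apply/allpairsP/idP => [[[? ?] [? _ [-> _]]] // | xs_a].
by exists (a, b); split => //; case: (b).
Qed.

Definition elems_over xs : seq (elem A) :=
  None :: [seq Some (l, b) | l <- lits_over xs, b <- [:: true; false]].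

Definition records_over xs : seq (record A) :=
  seqs_upto (size (elems_over xs)) (elems_over xs).

Lemma records_overP X xs R :
  (forall a, X a -> a \in xs) -> is_record X R -> R \in records_over xs.
Proof.
move=> sub_X [uniq_R X_R]; apply: uniq_mem_seqs_upto; first exact: map_uniq uniq_R.
move=> [[l b]|] R_lb; rewrite ?mem_head // in_cons allpairs_f ?orbT //.
  by rewrite mem_lits_over; apply/sub_X/X_R; rewrite mem_pmap (map_f _ R_lb).
by case: b {R_lb}.
Qed.

Definition witness_atoms (t : program A -> seq (lit A) -> program A) P xs : seq A :=
  flatten [seq atoms (t P L) | L <- seqs_upto (size (lits_over xs)) (lits_over xs)].

Lemma mem_witness_atoms t P xs a : atoms_t t P xs a -> a \in witness_atoms t P xs.
Proof.
case=> L [uniq_L [_ [complete_L L_a]]]; apply/flatten_mapP; exists L => //.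
apply: uniq_mem_seqs_upto => // l L_l.
by rewrite mem_lits_over -complete_L map_f.
Qed.

Definition states_over (RL RR : seq (record A)) : seq (state A) :=
  Failstate A ::
  flat_map (fun L => Ok L :: flat_map (fun R => [:: Pair L R SL; Pair L R SR]) RR) RL.

Lemma In_states_over X X' xs xs' s :
  (forall a, X a -> a \in xs) -> (forall a, X' a -> a \in xs') ->
  is_state X X' s -> List.In s (states_over (records_over xs) (records_over xs')).
Proof.
move=> sub_X sub_X'; case: s => [L R sd [X_L X'_R] | L X_L | _]; [right | right | by left].
- apply/in_flat_map; exists L; split; first exact/In_mem/(records_overP sub_X).
  right; apply/in_flat_map; exists R; split; first exact/In_mem/(records_overP sub_X').
  by case: sd; [left | right; left].
- by apply/in_flat_map; exists L; split; [exact/In_mem/(records_overP sub_X) | left].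
Qed.

End FiniteStates.

Import Order.TTheory.
Local Open Scope order_scope.

Lemma strict_mono_acyclic (T : Type) d (U : porderType d) (R : relation T)
    (f : T -> U) :
  (forall x y, R x y -> f x < f y) -> forall x, ~ clos_trans T R x x.
Proof.
move=> fR x; suff lt_ct y : clos_trans T R x y -> f x < f y.
  by move/lt_ct; rewrite ltxx.
by elim=> [|? ? ? _ ? _]; [exact: fR | exact: lt_trans].
Qed.

Section SeqLexi.
Variables (d : Order.disp_t) (T : porderType d).

Lemma ltxi_catl (p s1 s2 : seq T) :
  (p ++ s1 < p ++ s2 :> seqlexi T) = (s1 < s2 :> seqlexi T).
Proof. by elim: p => //= x p IH; rewrite eqhead_ltxiE. Qed.

Lemma ltxi_rcons (s : seq T) x : s < rcons s x :> seqlexi T.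
Proof. by elim: s => //= y s IH; rewrite eqhead_ltxiE. Qed.

End SeqLexi.

Section Acyclic.
Variable A : eqType.

Definition elem_weight (e : elem A) : nat := if e is Some (_, true) then 1 else 2.

Definition state_rank (s : state A) : seqlexi nat :=
  match s with
  | Pair L R sd =>
      map elem_weight L ++ [:: 0; if sd is SL then 0 else 1] ++ map elem_weight R
  | _ => [:: 3]
  end.

Lemma state_rank_lt_top L R sd : state_rank (Pair L R sd) < [:: 3] :> seqlexi nat.
Proof. by case: L => [|[[? []]|] ?]. Qed.

Variables (PL PR : pcond A -> Prop) (g : program A -> program A)
  (t : program A -> seq (lit A) -> program A) (Pi : program A).

Lemma edge_state_rank s s' : edge PL PR g t Pi s s' -> state_rank s < state_rank s'.
Proof.
case=> _ [_ [[]|[[]|[]]]] *; rewrite ?state_rank_lt_top // /state_rank.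
all: by rewrite ?map_cat ?map_rcons -?cats1 -?catA ?ltxi_catl // cats1 ltxi_rcons.
Qed.

End Acyclic.

Theorem lemma4 (A : eqType) (g : program A -> program A)
  (t : program A -> seq (lit A) -> program A) (Pg Pt : pcond A -> Prop) :
  is_gen g -> is_wit t ->
  (forall p, Pg p -> is_pcond p) -> (forall p, Pt p -> is_pcond p) ->
  forall Pi : program A,
    graph_finite g t Pi /\ graph_acyclic Pg Pt g t Pi.
Proof.
move=> _ _ _ _ Pi; split; last exact: strict_mono_acyclic (@edge_state_rank _ _ _ _ _ _).
exists (states_over (records_over (atoms (g Pi)))
                    (records_over (witness_atoms t Pi (atoms (g Pi))))).
by move=> s; apply: In_states_over => // a; apply: mem_witness_atoms.
Qed.
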